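(* Let $\lambda/\mu$ be a skew partition with $\lambda'_1=\mu'_1$ (i.e. the first column of $\lambda/\mu$ contains no boxes), and let $\rho/\nu$ be the skew partition obtained by removing the first column of the skew diagram $\lambda/\mu$ (so $\rho_i=\lambda_i-1$ and $\nu_i=\mu_i-1$ for $1\le i\le \lambda'_1$). Then the Jacobi–Trudi matrices $J_{\lambda/\mu}$ and $J_{\rho/\nu}$ are stably equivalent over the ring $\Lambda$ of symmetric functions, and the dual Jacobi–Trudi matrices $D_{\lambda/\mu}$ and $D_{\rho/\nu}$ are stably equivalent over $\Lambda$.
   Context: For partitions $\mu\subseteq\lambda$, $J_{\lambda/\mu}=(h_{\lambda_i-\mu_j-i+j})_{i,j=1}^{\ell(\lambda)}$ and $D_{\lambda/\mu}=(e_{\lambda'_i-\mu'_j-i+j})_{i,j=1}^{\ell(\lambda')}$, where $\ell$ denotes length, $\lambda'$ the conjugate partition, $h_k,e_k$ the complete and elementary symmetric functions, $h_0=e_0=1$, $h_k=e_k=0$ for $k<0$. Two matrices over a commutative ring $R$ are stably equivalent if one can be transformed into the other by a finite sequence of operations $M\mapsto AM$, $M\mapsto MA$ ($A$ invertible over $R$), $M\mapsto \begin{pmatrix}1&0\\0&M\end{pmatrix}$, and the inverse of the last. *)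

From HB Require Import structures.
From mathcomp Require Import all_boot all_order all_algebra.
From mathcomp Require Import monalg.
From Stdlib Require Import Relations.

Set Implicit Arguments.
Unset Strict Implicit.
Unset Printing Implicit Defensive.

Import GRing.Theory.
Local Open Scope ring_scope.

(* The ring Lambda of symmetric functions (over Z), presented as the
   polynomial ring Z[h_1, h_2, ...] in the algebraically independent
   complete symmetric functions h_k (Macdonald, I (2.8)).              *)
Definition Lam : Type := {malg int[{cmonom nat}]}.

Definition hsym (k : int) : Lam :=
  match k with
  | Posz 0 => 1
  | Posz n => << ucm n >>
  | Negz _ => 0
  end.

(* elementary symmetric functions, determined by the fundamental identity
   sum_{i=0}^n (-1)^i e_i h_{n-i} = 0 (n >= 1), e_0 = 1, i.e.
   e_n = sum_{i=1}^n (-1)^(i-1) h_i e_{n-i}.  [esyms n] = [e_0; ...; e_n]. *)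
Fixpoint esyms (n : nat) : seq Lam :=
  match n with
  | 0 => [:: 1]
  | n'.+1 =>
      let s := esyms n' in
      rcons s (\sum_(i < n'.+1) (-1) ^+ i * hsym (Posz i.+1) * nth 0 s (n' - i))
  end.

Definition esym (k : int) : Lam :=
  match k with
  | Posz n => nth 0 (esyms n) n
  | Negz _ => 0
  end.

(* Partitions: weakly decreasing sequences of positive integers
   (lambda_1 >= lambda_2 >= ... >= lambda_l > 0); lambda_i = nth 0 la (i-1). *)
Definition is_partition (la : seq nat) : bool :=
  sorted geq la && all (fun x => 0 < x)%N la.

Definition part_sub (mu la : seq nat) : Prop :=
  forall i : nat, (nth 0 mu i <= nth 0 la i)%N.

Definition conj_part (la : seq nat) : seq nat :=
  [seq count (fun x => j <= x)%N la | j <- iota 1 (head 0%N la)].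

Definition conj_at (la : seq nat) (j : nat) : nat := nth 0%N (conj_part la) j.-1.

Definition remove_first_col (la : seq nat) : seq nat :=
  [seq x <- map predn la | (0 < x)%N].

(* Jacobi--Trudi matrix J_{la/mu} = (h_{la_i - mu_j - i + j})_{i,j=1}^{l(la)}
   (with 0-based indices i, j : 'I_l(la), the shift cancels). *)
Definition JT (la mu : seq nat) : 'M[Lam]_(size la) :=
  \matrix_(i < size la, j < size la)
    hsym ((nth 0%N la i)%:Z - (nth 0%N mu j)%:Z - (i : nat)%:Z + (j : nat)%:Z).

Definition DJT (la mu : seq nat) : 'M[Lam]_(size (conj_part la)) :=
  \matrix_(i < size (conj_part la), j < size (conj_part la))
    esym ((nth 0%N (conj_part la) i)%:Z - (nth 0%N (conj_part mu) j)%:Z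
          - (i : nat)%:Z + (j : nat)%:Z).

Record packed_mx (R : Type) := PackMx {
  pm_rows : nat; pm_cols : nat; pm_mx : 'M[R]_(pm_rows, pm_cols) }.
Arguments PackMx {R} [pm_rows pm_cols] pm_mx.

Definition invertible_mx (R : comNzRingType) (n : nat) (A : 'M[R]_n) : Prop :=
  exists B : 'M[R]_n, A *m B = 1%:M /\ B *m A = 1%:M.

Inductive stable_step (R : comNzRingType) : packed_mx R -> packed_mx R -> Prop :=
  | st_left m n (A : 'M[R]_m) (M : 'M[R]_(m, n)) :
      invertible_mx A -> stable_step (PackMx M) (PackMx (A *m M))
  | st_right m n (A : 'M[R]_n) (M : 'M[R]_(m, n)) :
      invertible_mx A -> stable_step (PackMx M) (PackMx (M *m A))
  | st_stab m n (M : 'M[R]_(m, n)) :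
      stable_step (PackMx M) (PackMx (block_mx (1%:M : 'M[R]_1) 0 0 M))
  | st_destab m n (M : 'M[R]_(m, n)) :
      stable_step (PackMx (block_mx (1%:M : 'M[R]_1) 0 0 M)) (PackMx M).

Definition stably_equivalent (R : comNzRingType) (m n p q : nat)
    (M : 'M[R]_(m, n)) (N : 'M[R]_(p, q)) : Prop :=
  clos_refl_trans (packed_mx R) (@stable_step R) (PackMx M) (PackMx N).

From Pilot Require Import Defs.
From HB Require Import structures.
From mathcomp Require Import all_boot all_order all_algebra all_fingroup zify.
From mathcomp Require Import monalg.
From Stdlib Require Import Relations.

(* Stable equivalence lets one delete a row and a column meeting in an entry
   1 when the rest of that row (or column) vanishes: move the entry to the
   corner by permutations, clear the rest of its column (row) by one
   elementary operation, and destabilize.  As h_0 = e_0 = 1 and h_k = e_k = 0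
   for k < 0, this applies to both matrices.  In J_{la/mu} the rows
   i > l(rho) have la_i = mu_i = 1, so the bottom row is (0, ..., 0, 1) and
   these rows can be peeled off one at a time; what remains is J_{rho/nu},
   because la_i - mu_j = rho_i - nu_j.  In D_{la/mu} the hypothesis
   la'_1 = mu'_1 makes the first column (1, 0, ..., 0), and deleting it with
   the first row leaves D_{rho/nu}, because rho' and nu' are la' and mu'
   with their first entries removed. *)

Set Implicit Arguments.
Unset Strict Implicit.
Unset Printing Implicit Defensive.

Import GRing.Theory.
Local Open Scope ring_scope.

Section StableEquivalence.

Variable R : comNzRingType.

Lemma stably_equiv_refl m n (M : 'M[R]_(m, n)) : stably_equivalent M M.
Proof. exact: rt_refl. Qed.

Lemma stably_equiv_trans m n p q r s (M : 'M[R]_(m, n)) (N : 'M[R]_(p, q))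
    (P : 'M[R]_(r, s)) :
  stably_equivalent M N -> stably_equivalent N P -> stably_equivalent M P.
Proof. exact: rt_trans. Qed.

Lemma stably_equiv_mull m n (A : 'M[R]_m) (M : 'M[R]_(m, n)) :
  invertible_mx A -> stably_equivalent M (A *m M).
Proof. by move=> A_inv; apply: rt_step; constructor. Qed.

Lemma stably_equiv_mulr m n (A : 'M[R]_n) (M : 'M[R]_(m, n)) :
  invertible_mx A -> stably_equivalent M (M *m A).
Proof. by move=> A_inv; apply: rt_step; constructor. Qed.

Lemma stably_equiv_destab m n (M : 'M[R]_(m, n)) :
  stably_equivalent (block_mx (1%:M : 'M[R]_1) 0 0 M) M.
Proof. by apply: rt_step; constructor. Qed.

Lemma invertible_perm_mx n (s : 'S_n) : invertible_mx (perm_mx s : 'M[R]_n).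
Proof. by exists (perm_mx s^-1); rewrite -!perm_mxM mulgV mulVg perm_mx1. Qed.

Lemma invertible_block_ur p q (B : 'M[R]_(p, q)) :
  invertible_mx (block_mx 1%:M B 0 1%:M).
Proof.
exists (block_mx 1%:M (- B) 0 1%:M).
by rewrite !mulmx_block !(mul1mx, mulmx1, mul0mx, mulmx0, add0r, addr0, subrr, addNr)
  -scalar_mx_block.
Qed.

Lemma invertible_block_dl p q (B : 'M[R]_(q, p)) :
  invertible_mx (block_mx 1%:M 0 B 1%:M).
Proof.
exists (block_mx 1%:M 0 (- B) 1%:M).
by rewrite !mulmx_block !(mul1mx, mulmx1, mul0mx, mulmx0, add0r, addr0, subrr, addNr)
  -scalar_mx_block.
Qed.

Lemma stably_equiv_block_ur m n (B : 'M[R]_(1, n)) (M : 'M[R]_(m, n)) :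
  stably_equivalent (block_mx 1%:M B 0 M) M.
Proof.
apply: stably_equiv_trans _ (stably_equiv_destab M).
have -> : block_mx 1%:M 0 0 M = block_mx 1%:M B 0 M *m block_mx 1%:M (- B) 0 1%:M.
  by rewrite mulmx_block !(mul1mx, mulmx1, mul0mx, mulmx0, add0r, addr0, addNr, addrN).
exact/stably_equiv_mulr/invertible_block_ur.
Qed.

Lemma stably_equiv_block_dl m n (B : 'M[R]_(m, 1)) (M : 'M[R]_(m, n)) :
  stably_equivalent (block_mx 1%:M 0 B M) M.
Proof.
apply: stably_equiv_trans _ (stably_equiv_destab M).
have -> : block_mx 1%:M 0 0 M = block_mx 1%:M 0 (- B) 1%:M *m block_mx 1%:M 0 B M.
  by rewrite mulmx_block !(mul1mx, mulmx1, mul0mx, mulmx0, add0r, addr0, addNr, addrN).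
exact/stably_equiv_mull/invertible_block_dl.
Qed.

Definition pivot_mx m n (i0 : 'I_m.+1) (j0 : 'I_n.+1) (M : 'M[R]_(m.+1, n.+1))
    : 'M[R]_(1 + m, 1 + n) :=
  row_perm (lift_perm ord0 i0 1) (col_perm (lift_perm ord0 j0 1) M).

Lemma pivot_mxE m n (i0 : 'I_m.+1) (j0 : 'I_n.+1) (M : 'M[R]_(m.+1, n.+1)) :
  pivot_mx i0 j0 M = block_mx (M i0 j0)%:M (row i0 (col' j0 M)) (col j0 (row' i0 M))
                              (row' i0 (col' j0 M)).
Proof.
apply/matrixP=> i j; rewrite -[i]splitK -[j]splitK.
have lshift0 p : lshift p (ord0 : 'I_1) = ord0 :> 'I_(1 + p) by apply: val_inj.
have rshift1 p (k : 'I_p) : rshift 1 k = lift ord0 k :> 'I_(1 + p) by apply: val_inj.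
case: (split i) => [i'|k]; case: (split j) => [j'|l];
  rewrite /= ?block_mxEul ?block_mxEur ?block_mxEdl ?block_mxEdr !mxE ?(ord1 i') ?(ord1 j');
  by rewrite ?lshift0 ?rshift1 ?lift_perm_id ?lift_perm_lift ?perm1.
Qed.

Lemma stably_equiv_pivot m n (i0 : 'I_m.+1) (j0 : 'I_n.+1) (M : 'M[R]_(m.+1, n.+1)) :
  stably_equivalent M (pivot_mx i0 j0 M).
Proof.
rewrite /pivot_mx row_permE col_permE.
apply: stably_equiv_trans (stably_equiv_mulr _ (invertible_perm_mx _)) _.
exact/stably_equiv_mull/invertible_perm_mx.
Qed.

Lemma stably_equiv_minor_unit_col m n (i0 : 'I_m.+1) (j0 : 'I_n.+1)
    (M : 'M[R]_(m.+1, n.+1)) :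
  (forall i, M i j0 = (i == i0)%:R) -> stably_equivalent M (row' i0 (col' j0 M)).
Proof.
move=> M_col.
apply: stably_equiv_trans (stably_equiv_pivot i0 j0 M) _.
rewrite pivot_mxE M_col eqxx.
have -> : col j0 (row' i0 M) = 0.
  by apply/matrixP=> i k; rewrite !mxE M_col eq_sym (negbTE (neq_lift _ _)).
exact: stably_equiv_block_ur.
Qed.

Lemma stably_equiv_minor_unit_row m n (i0 : 'I_m.+1) (j0 : 'I_n.+1)
    (M : 'M[R]_(m.+1, n.+1)) :
  (forall j, M i0 j = (j == j0)%:R) -> stably_equivalent M (row' i0 (col' j0 M)).
Proof.
move=> M_row.
apply: stably_equiv_trans (stably_equiv_pivot i0 j0 M) _.
rewrite pivot_mxE M_row eqxx.
have -> : row i0 (col' j0 M) = 0.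
  by apply/matrixP=> k j; rewrite !mxE M_row eq_sym (negbTE (neq_lift _ _)).
exact: stably_equiv_block_dl.
Qed.

End StableEquivalence.

Section JacobiTrudiMatrix.

Variables (R : comNzRingType) (a : int -> R).
Hypothesis a0 : a 0 = 1.
Hypothesis a_neg : forall k, k < 0 -> a k = 0.

Definition jacobi_trudi_mx (p q : seq nat) (n : nat) : 'M[R]_n :=
  \matrix_(i < n, j < n)
    a ((nth 0%N p i)%:Z - (nth 0%N q j)%:Z - (i : nat)%:Z + (j : nat)%:Z).

Lemma stably_equiv_jacobi_trudi_behead p q :
  nth 0%N p 0 = nth 0%N q 0 -> (forall i, nth 0%N p i <= nth 0%N p 0)%N ->
  stably_equivalent (jacobi_trudi_mx p q (size p))
                    (jacobi_trudi_mx (behead p) (behead q) (size (behead p))).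
Proof.
case: p => [|x p] /= p0_q0 le_p0.
  rewrite (flatmx0 (jacobi_trudi_mx _ q 0)) (flatmx0 (jacobi_trudi_mx _ _ 0)).
  exact: stably_equiv_refl.
have -> : jacobi_trudi_mx p (behead q) (size p)
          = row' ord0 (col' ord0 (jacobi_trudi_mx (x :: p) q (size p).+1)).
  apply/matrixP=> i j; rewrite !mxE !lift0 /= nth_behead; congr a; lia.
apply: stably_equiv_minor_unit_col => -[[|i] lt_i] /=; rewrite !mxE /=.
  by rewrite -p0_q0 subrr !addr0 a0.
apply: a_neg; have := le_p0 i.+1; rewrite /= -p0_q0; lia.
Qed.

Lemma stably_equiv_jacobi_trudi_truncate p q n N : (n <= N)%N ->
  (forall i, n <= i < N -> nth 0%N p i = nth 0%N q i)%N ->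
  (forall i j, n <= i < N -> j < i -> nth 0%N p i <= nth 0%N q j)%N ->
  stably_equivalent (jacobi_trudi_mx p q N) (jacobi_trudi_mx p q n).
Proof.
elim: N => [|N IH]; first by rewrite leqn0 => /eqP-> _ _; apply: stably_equiv_refl.
rewrite leq_eqVlt ltnS => /orP[/eqP-> _ _|le_n_N p_q p_le_q].
  exact: stably_equiv_refl.
have diag i : (n <= i < N)%N -> nth 0%N p i = nth 0%N q i.
  by case/andP=> ? ?; apply: p_q; lia.
have below i j : (n <= i < N)%N -> (j < i)%N -> (nth 0%N p i <= nth 0%N q j)%N.
  by case/andP=> ? ?; apply: p_le_q; lia.
apply: stably_equiv_trans _ (IH le_n_N diag below).
have -> : jacobi_trudi_mx p q N
          = row' ord_max (col' ord_max (jacobi_trudi_mx p q N.+1)).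
  by apply/matrixP=> i j; rewrite !mxE !lift_max.
apply: stably_equiv_minor_unit_row => j; rewrite !mxE /=.
have [lt_j_N|ge_j_N] := ltnP j N.
  rewrite (_ : j == ord_max = false); last by apply/negbTE; rewrite neq_ltn lt_j_N.
  apply: a_neg; have := p_le_q N j; lia.
have -> : j = ord_max by apply/val_inj/eqP; rewrite eqn_leq ge_j_N -ltnS ltn_ord.
rewrite eqxx /= p_q; last by lia.
by rewrite subrr add0r addNr a0.
Qed.

End JacobiTrudiMatrix.

Lemma remove_first_col_le1 s : all (fun x => x <= 1)%N s -> remove_first_col s = [::].
Proof.
elim: s => [|x s IH] //= /andP[le_x1 /IH].
by rewrite /remove_first_col /=; case: x le_x1 => [|[]].
Qed.

Lemma nth_remove_first_col s i :
  sorted geq s -> nth 0%N (remove_first_col s) i = (nth 0%N s i).-1.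
Proof.
elim: s i => [|x s IH] i s_sorted; first by rewrite !nth_nil.
have le_s_x : all (geq x) s.
  by apply: order_path_min s_sorted => ? ? ? le_yx le_zy; apply: leq_trans le_zy le_yx.
have [lt_1x|le_x1] := ltnP 1 x.
  rewrite /remove_first_col /= ltn_predRL lt_1x.
  by case: i => [|i] //=; apply: IH; apply: path_sorted s_sorted.
have le_s1 : all (fun y => y <= 1)%N (x :: s).
  by rewrite /= le_x1; apply: sub_all le_s_x => y /leq_trans; apply.
rewrite remove_first_col_le1 // nth_nil.
have [lt_i|le_i] := ltnP i (size (x :: s)); last by rewrite nth_default.
by move/allP: le_s1 => /(_ _ (mem_nth 0%N lt_i)); case: nth => [|[]].
Qed.

Lemma size_remove_first_col s : (size (remove_first_col s) <= size s)%N.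
Proof. by rewrite size_filter -(size_map predn) count_size. Qed.

Lemma conj_part_remove_first_col s :
  sorted geq s -> conj_part (remove_first_col s) = behead (conj_part s).
Proof.
move=> s_sorted; rewrite /conj_part -!nth0 nth_remove_first_col //.
case: (nth 0%N s 0) => [|c] //=; rewrite (iotaDl 1 1) -map_comp.
apply/eq_in_map => j; rewrite mem_iota => /andP[j_gt0 _] /=.
by rewrite count_filter count_map; apply: eq_count => x /=; lia.
Qed.

Lemma nth_conj_part_le_head s i :
  (nth 0%N (conj_part s) i <= nth 0%N (conj_part s) 0)%N.
Proof.
rewrite /conj_part; have [lt_i|le_i] := ltnP i (head 0%N s); last first.
  by rewrite nth_default // size_map size_iota.
have head_gt0 : (0 < head 0%N s)%N by apply: leq_ltn_trans lt_i.
rewrite !(nth_map 0%N) ?size_iota // !nth_iota //.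
by apply: sub_count => x; apply: leq_trans.
Qed.

Lemma conj_at1 s : all (fun x => 0 < x)%N s -> conj_at s 1 = size s.
Proof.
case: s => [|x s] //= /andP[x_gt0]; rewrite all_count => /eqP count_s.
by rewrite /conj_at /conj_part /= (nth_map 0%N) ?size_iota // nth_iota // x_gt0 count_s.
Qed.

Lemma hsym_neg (k : int) : k < 0 -> hsym k = 0. Proof. by case: k. Qed.

Lemma esym_neg (k : int) : k < 0 -> Defs.esym k = 0. Proof. by case: k. Qed.

Lemma stably_equiv_JT_remove_first_col la mu :
  is_partition la -> is_partition mu -> part_sub mu la -> size mu = size la ->
  stably_equivalent (JT la mu) (JT (remove_first_col la) (remove_first_col mu)).
Proof.
case/andP=> la_sorted la_gt0 /andP[mu_sorted mu_gt0] mu_le_la size_mu.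
set rho := remove_first_col la; set nu := remove_first_col mu.
have la_pos i : (i < size la)%N -> (0 < nth 0%N la i)%N.
  by move=> lt_i; apply/(allP la_gt0)/mem_nth.
have mu_pos i : (i < size la)%N -> (0 < nth 0%N mu i)%N.
  by rewrite -size_mu => lt_i; apply/(allP mu_gt0)/mem_nth.
have size_rho : (size rho <= size la)%N := size_remove_first_col la.
have tail_rows_one i : (size rho <= i < size la)%N ->
    nth 0%N la i = 1%N /\ nth 0%N mu i = 1%N.
  case/andP=> ge_i lt_i; have := nth_remove_first_col i la_sorted.
  rewrite nth_default // => la_i; have := mu_le_la i.
  have := la_pos i lt_i; have := mu_pos i lt_i; lia.
have -> : JT la mu = jacobi_trudi_mx hsym la mu (size la) by [].
apply: stably_equiv_trans
  (stably_equiv_jacobi_trudi_truncate (erefl : hsym 0 = 1) hsym_neg size_rho _ _) _.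
- by move=> i /tail_rows_one[-> ->].
- move=> i j i_tail lt_ji; have [-> _] := tail_rows_one i i_tail.
  by apply: mu_pos; case/andP: i_tail => _; apply: ltn_trans.
have -> : jacobi_trudi_mx hsym la mu (size rho) = JT rho nu; last exact: stably_equiv_refl.
apply/matrixP=> i j; rewrite !mxE !nth_remove_first_col //.
have := la_pos i (leq_trans (ltn_ord i) size_rho).
have := mu_pos j (leq_trans (ltn_ord j) size_rho).
by move=> ? ?; congr hsym; lia.
Qed.

Lemma stably_equiv_DJT_remove_first_col la mu :
  sorted geq la -> sorted geq mu -> conj_at la 1 = conj_at mu 1 ->
  stably_equivalent (DJT la mu) (DJT (remove_first_col la) (remove_first_col mu)).
Proof.
move=> la_sorted mu_sorted conj_la_mu.
rewrite /DJT !conj_part_remove_first_col //.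
apply: (stably_equiv_jacobi_trudi_behead (erefl : Defs.esym 0 = 1) esym_neg) => //.
exact: nth_conj_part_le_head.
Qed.

Theorem lemma4p1 (la mu : seq nat) :
  is_partition la -> is_partition mu -> part_sub mu la ->
  conj_at la 1 = conj_at mu 1 ->
  stably_equivalent (JT la mu) (JT (remove_first_col la) (remove_first_col mu)) /\
  stably_equivalent (DJT la mu) (DJT (remove_first_col la) (remove_first_col mu)).
Proof.
move=> la_part mu_part mu_le_la conj_la_mu; split.
  apply: stably_equiv_JT_remove_first_col => //.
  by rewrite -!conj_at1 ?(andP la_part).2 ?(andP mu_part).2.
apply: stably_equiv_DJT_remove_first_col => //.
- exact: (andP la_part).1.
- exact: (andP mu_part).1.
Qed.
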